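(* Let $I$ be a monomial ideal of $R=K[x_1,\ldots,x_d]$ ($K$ a field) and let $r,s\in\mathbb{R}$, $r,s\ge0$. Then (1) if $s\ge r\ge0$, then $\overline{I^s}\subseteq\overline{I^r}$; (2) $\overline{I^s}\cdot\overline{I^r}\subseteq\overline{I^{s+r}}$.
   Context: $\mathbb{N}$ denotes the non-negative integers and $\mathbf{x}^{\mathbf{a}}=x_1^{a_1}\cdots x_d^{a_d}$. $NP(I)$ is the convex hull in $\mathbb{R}^d$ of $\{\mathbf{a}\in\mathbb{N}^d\mid \mathbf{x}^{\mathbf{a}}\in I\}$. For real $t\ge0$, the $t$-th real power of $I$ is $\overline{I^t}=(\{\mathbf{x}^{\mathbf{a}}\mid \mathbf{a}\in t\cdot NP(I)\cap\mathbb{N}^d\})$, where $t\cdot NP(I)=\{t\mathbf{v}\mid\mathbf{v}\in NP(I)\}$. *)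

From mathcomp Require Import all_boot all_algebra.
From mathcomp Require Import reals.
From mathcomp Require Import mpoly.
Set Implicit Arguments. Unset Strict Implicit. Unset Printing Implicit Defensive.
Import GRing.Theory Num.Theory.
Local Open Scope ring_scope.

Definition ideal_gen (P : comNzRingType) (G : P -> Prop) (p : P) : Prop :=
  exists (n : nat) (c g : 'I_n -> P),
    (forall k, G (g k)) /\ p = \sum_(k < n) c k * g k.

Definition is_monomial_ideal (K : fieldType) (d : nat)
    (I : {mpoly K[d]} -> Prop) : Prop :=
  exists G : 'X_{1..d} -> Prop,
    forall p, I p <-> ideal_gen (fun q => exists m, G m /\ q = 'X_[m]) p.

Definition expvec (R : realType) (d : nat) (m : 'X_{1..d}) : 'I_d -> R :=
  fun i => (m i)%:R.

Definition conv_hull (R : realType) (d : nat) (S : ('I_d -> R) -> Prop)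
    (v : 'I_d -> R) : Prop :=
  exists (n : nat) (pts : 'I_n -> 'I_d -> R) (w : 'I_n -> R),
    (forall k, S (pts k)) /\ (forall k, 0 <= w k) /\
    \sum_(k < n) w k = 1 /\
    (forall i, v i = \sum_(k < n) w k * pts k i).

Definition NP (R : realType) (K : fieldType) (d : nat)
    (I : {mpoly K[d]} -> Prop) : ('I_d -> R) -> Prop :=
  conv_hull (fun v => exists m : 'X_{1..d}, I 'X_[m] /\ v = expvec R m).

Definition real_pow (R : realType) (K : fieldType) (d : nat)
    (I : {mpoly K[d]} -> Prop) (t : R) : {mpoly K[d]} -> Prop :=
  ideal_gen (fun q => exists m : 'X_{1..d},
    (exists v, @NP R K d I v /\ forall i, expvec R m i = t * v i) /\ q = 'X_[m]).

Definition ideal_mul (K : fieldType) (d : nat) (I J : {mpoly K[d]} -> Prop)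
    : {mpoly K[d]} -> Prop :=
  ideal_gen (fun q => exists f g, I f /\ J g /\ q = f * g).

(* Because I is a monomial ideal, NP(I) is stable under adding vectors of N^d,
   hence, being convex, under adding any non-negative real vector: u + t e_i
   lies on the segment from u to u + N e_i for an integer N > t.  So for
   0 < r <= s a point s v of s NP(I) equals r (v + (s/r - 1) v), which lies in
   r NP(I); for r = 0 the real power is the unit ideal.  Convexity gives
   s NP(I) + r NP(I) = (s + r) NP(I), and products of generators are
   generators, which is the product rule. *)

From mathcomp Require Import all_boot all_algebra.
From mathcomp Require Import reals.
From mathcomp Require Import mpoly.
From mathcomp Require Import ring lra.
Set Implicit Arguments. Unset Strict Implicit. Unset Printing Implicit Defensive.
Import order.Order.TTheory GRing.Theory Num.Theory.
Local Open Scope ring_scope.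

Definition catf (T : Type) (n m : nat) (f : 'I_n -> T) (g : 'I_m -> T)
    (k : 'I_(n + m)) : T :=
  match split k with inl j => f j | inr j => g j end.

Lemma catf_lshift (T : Type) (n m : nat) (f : 'I_n -> T) (g : 'I_m -> T) j :
  catf f g (lshift m j) = f j.
Proof. by rewrite /catf (unsplitK (inl _ j)). Qed.

Lemma catf_rshift (T : Type) (n m : nat) (f : 'I_n -> T) (g : 'I_m -> T) j :
  catf f g (rshift n j) = g j.
Proof. by rewrite /catf (unsplitK (inr _ j)). Qed.

Lemma catf_ind (T : Type) (P : T -> Prop) (n m : nat) (f : 'I_n -> T)
    (g : 'I_m -> T) :
  (forall j, P (f j)) -> (forall j, P (g j)) -> forall k, P (catf f g k).
Proof. by move=> Pf Pg k; rewrite /catf; case: split. Qed.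

Section IdealGen.
Variable P : comNzRingType.
Implicit Types G : P -> Prop.

Lemma ideal_gen0 G : ideal_gen G 0.
Proof. by exists 0%N, (fun=> 0), (fun=> 0); split=> [[]|]; rewrite ?big_ord0. Qed.

Lemma ideal_gen_mem G g : G g -> ideal_gen G g.
Proof. by move=> Gg; exists 1%N, (fun=> 1), (fun=> g); rewrite big_ord1 mul1r. Qed.

Lemma ideal_genD G p q : ideal_gen G p -> ideal_gen G q -> ideal_gen G (p + q).
Proof.
move=> [n [c [g [Gg ->]]]] [n' [c' [g' [Gg' ->]]]].
exists (n + n')%N, (catf c c'), (catf g g'); split; first exact: catf_ind.
by rewrite big_split_ord; congr (_ + _); apply: eq_bigr => k _;
  rewrite ?catf_lshift ?catf_rshift.
Qed.

Lemma ideal_genMl G a p : ideal_gen G p -> ideal_gen G (a * p).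
Proof.
move=> [n [c [g [Gg ->]]]]; exists n, (fun k => a * c k), g; split=> //.
by rewrite mulr_sumr; apply: eq_bigr => k _; rewrite mulrA.
Qed.

Lemma ideal_gen_sum G n (c x : 'I_n -> P) :
  (forall k, ideal_gen G (x k)) -> ideal_gen G (\sum_(k < n) c k * x k).
Proof.
elim: n c x => [|n IH] c x Gx; first by rewrite big_ord0; exact: ideal_gen0.
by rewrite big_ord_recr; apply: ideal_genD; [apply: IH | apply: ideal_genMl].
Qed.

Lemma sub_ideal_gen G G' p :
  (forall g, G g -> ideal_gen G' g) -> ideal_gen G p -> ideal_gen G' p.
Proof. by move=> GG' [n [c [g [Gg ->]]]]; apply: ideal_gen_sum => k; apply: GG'. Qed.

Lemma ideal_genM G1 G2 G f g :
  (forall a b, G1 a -> G2 b -> ideal_gen G (a * b)) ->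
  ideal_gen G1 f -> ideal_gen G2 g -> ideal_gen G (f * g).
Proof.
move=> G12 [n [c [a [G1a ->]]]] [n' [c' [b [G2b ->]]]].
rewrite mulr_suml; under eq_bigr do rewrite -mulrA.
apply: ideal_gen_sum => i; rewrite mulr_sumr; under eq_bigr do rewrite mulrCA.
by apply: ideal_gen_sum => k; apply: G12.
Qed.

End IdealGen.

Section ConvexHull.
Variables (R : realType) (d : nat) (S : ('I_d -> R) -> Prop).

Lemma eq_conv_hull u v : conv_hull S u -> u =1 v -> conv_hull S v.
Proof.
move=> [n [pts [w [Spts [w_ge0 [w1 uE]]]]]] uv.
by exists n, pts, w; do 3!split=> //; move=> i; rewrite -uv uE.
Qed.

Lemma conv_hull_ge0 u i :
  (forall v, S v -> forall i, 0 <= v i) -> conv_hull S u -> 0 <= u i.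
Proof.
move=> S_ge0 [n [pts [w [Spts [w_ge0 [_ ->]]]]]].
by apply: sumr_ge0 => k _; rewrite mulr_ge0 ?S_ge0.
Qed.

Lemma conv_hull_convex u v l : 0 <= l <= 1 ->
  conv_hull S u -> conv_hull S v ->
  conv_hull S (fun i => l * u i + (1 - l) * v i).
Proof.
move=> /andP[l_ge0 l_le1] [n [pts [w [Spts [w_ge0 [w1 uE]]]]]]
  [n' [pts' [w' [Spts' [w'_ge0 [w'1 vE]]]]]].
exists (n + n')%N, (catf pts pts'),
  (catf (fun k => l * w k) (fun k => (1 - l) * w' k)).
split; first exact: catf_ind.
split; first by apply: (catf_ind (P := fun x : R => 0 <= x)) => k;
  rewrite mulr_ge0 ?subr_ge0.
split.
  rewrite big_split_ord /=.
  under eq_bigr do rewrite catf_lshift.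
  under [X in _ + X]eq_bigr do rewrite catf_rshift.
  by rewrite -!mulr_sumr w1 w'1; ring.
move=> i; rewrite big_split_ord /= uE vE !mulr_sumr.
by congr (_ + _); apply: eq_bigr => k _;
  rewrite ?catf_lshift ?catf_rshift mulrA.
Qed.

Lemma conv_hull_translate u e : (forall v, S v -> S (fun i => v i + e i)) ->
  conv_hull S u -> conv_hull S (fun i => u i + e i).
Proof.
move=> Se [n [pts [w [Spts [w_ge0 [w1 uE]]]]]].
exists n, (fun k i => pts k i + e i), w.
split; first by move=> k; apply: Se.
do 2!split=> //; move=> i.
by under eq_bigr do rewrite mulrDr; rewrite big_split -mulr_suml w1 mul1r uE.
Qed.

Hypothesis S_addn : forall v (a : 'I_d -> nat), S v -> S (fun i => v i + (a i)%:R).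

Lemma conv_hull_add_delta u i0 t : 0 <= t ->
  conv_hull S u -> conv_hull S (fun i => u i + (i == i0)%:R * t).
Proof.
move=> t_ge0 Su; set N := Num.Def.archi_bound t.
have t_lt_N : t < N%:R := archi_boundP t_ge0.
have N_gt0 : 0 < N%:R :> R by apply: le_lt_trans t_lt_N.
have SuN : conv_hull S (fun i => u i + ((i == i0) * N)%:R).
  by apply: conv_hull_translate Su => v Sv; apply: S_addn.
have l01 : 0 <= t / N%:R <= 1.
  by rewrite divr_ge0 ?ler0n // ler_pdivrMr // mul1r ltW.
apply: (eq_conv_hull (conv_hull_convex l01 SuN Su)) => i.
by rewrite natrM; field; rewrite gt_eqF.
Qed.

Lemma conv_hull_addr_ge0 u w : (forall i, 0 <= w i) ->
  conv_hull S u -> conv_hull S (fun i => u i + w i).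
Proof.
move=> w_ge0 Su.
suff /(_ (index_enum 'I_d)) : forall r : seq 'I_d,
    conv_hull S (fun i => u i + \sum_(j <- r) (i == j)%:R * w j).
  move=> /eq_conv_hull; apply=> i; congr (_ + _).
  rewrite (bigD1 i) //= eqxx mul1r big1 ?addr0 // => j.
  by rewrite eq_sym => /negbTE ->; rewrite mul0r.
elim=> [|j r IH]; first by apply: (eq_conv_hull Su) => i; rewrite big_nil addr0.
apply: (eq_conv_hull (conv_hull_add_delta j (w_ge0 j) IH)) => i.
by rewrite big_cons; ring.
Qed.

Hypothesis S_ge0 : forall v, S v -> forall i, 0 <= v i.

Lemma conv_hull_scale_ge1 u c : 1 <= c ->
  conv_hull S u -> conv_hull S (fun i => c * u i).
Proof.
move=> c_ge1 Su.
have w_ge0 i : 0 <= (c - 1) * u i by rewrite mulr_ge0 ?subr_ge0 ?conv_hull_ge0.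
by apply: (eq_conv_hull (conv_hull_addr_ge0 w_ge0 Su)) => i; ring.
Qed.

End ConvexHull.

Section NewtonPolyhedron.
Variables (R : realType) (K : fieldType) (d : nat) (I : {mpoly K[d]} -> Prop).
Hypothesis I_monomial : is_monomial_ideal I.

Lemma monomial_idealMl p q : I p -> I (q * p).
Proof. by case: I_monomial => G IG /IG Ip; apply/IG; apply: ideal_genMl. Qed.

Lemma expvecD (m m' : 'X_{1..d}) i :
  expvec R (m + m')%MM i = expvec R m i + expvec R m' i.
Proof. by rewrite /expvec mnmDE natrD. Qed.

Lemma NP_scale_ge1 v c : 1 <= c -> @NP R K d I v -> @NP R K d I (fun i => c * v i).
Proof.
apply: conv_hull_scale_ge1; last by move=> _ [m [_ ->]] j; apply: ler0n.
move=> _ a [m [Im ->]]; exists (m + [multinom a i | i < d])%MM; split.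
  by rewrite mpolyXD mulrC; apply: monomial_idealMl.
by apply: boolp.funext => i; rewrite /expvec mnmDE mnmE natrD.
Qed.

Definition in_scaled_NP (t : R) (m : 'X_{1..d}) : Prop :=
  exists v, @NP R K d I v /\ forall i, expvec R m i = t * v i.

Lemma real_powX t m : in_scaled_NP t m -> @real_pow R K d I t 'X_[m].
Proof. by move=> tm; apply: ideal_gen_mem; exists m. Qed.

Lemma in_scaled_NP0 t m : in_scaled_NP t m -> in_scaled_NP 0 0%MM.
Proof. by move=> [v [NPv _]]; exists v; split=> // i; rewrite /expvec mnm0E mul0r. Qed.

Lemma in_scaled_NP_le r s m : 0 < r -> r <= s ->
  in_scaled_NP s m -> in_scaled_NP r m.
Proof.
move=> r_gt0 rs [v [NPv mE]]; exists (fun i => s / r * v i); split.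
  by apply: NP_scale_ge1 => //; rewrite ler_pdivlMr // mul1r.
by move=> i; rewrite mE; field; rewrite gt_eqF.
Qed.

Lemma in_scaled_NPD s r m m' : 0 <= s -> 0 <= r ->
  in_scaled_NP s m -> in_scaled_NP r m' -> in_scaled_NP (s + r) (m + m').
Proof.
move=> s_ge0 r_ge0 [v [NPv mE]] [v' [NPv' m'E]].
have [sr0|sr_gt0] : s + r = 0 \/ 0 < s + r.
  by case: (ltgtP 0 (s + r)) => [|h|<-]; [right|lra|left].
  have [s0 r0] : s = 0 /\ r = 0 by lra.
  by exists v; split=> // i; rewrite expvecD mE m'E s0 r0; ring.
pose l := s / (s + r).
exists (fun i => l * v i + (1 - l) * v' i); split.
  by apply: conv_hull_convex; rewrite // divr_ge0 ?ler_pdivrMr // ?mul1r; lra.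
by move=> i; rewrite expvecD mE m'E /l; field; rewrite gt_eqF.
Qed.

Lemma real_pow_antimono r s p : 0 <= r -> r <= s ->
  @real_pow R K d I s p -> @real_pow R K d I r p.
Proof.
move=> r_ge0 rs; apply: sub_ideal_gen => _ [m [sm ->]].
case: (ltgtP 0 r) r_ge0 => [r_gt0 _|//|r0 _].
  by apply: real_powX; apply: in_scaled_NP_le sm.
have -> : 'X_[m] = 'X_[m] * 'X_[0%MM] :> {mpoly K[d]} by rewrite mpolyX0 mulr1.
by apply: ideal_genMl; apply: real_powX; rewrite -r0; apply: in_scaled_NP0 sm.
Qed.

Lemma real_pow_mul s r p : 0 <= s -> 0 <= r ->
  ideal_mul (@real_pow R K d I s) (@real_pow R K d I r) p ->
  @real_pow R K d I (s + r) p.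
Proof.
move=> s_ge0 r_ge0; apply: sub_ideal_gen => _ [f [g [sf [rg ->]]]].
apply: ideal_genM sf rg => _ _ [m [sm ->]] [m' [rm' ->]].
by rewrite -mpolyXD; apply: real_powX; apply: in_scaled_NPD.
Qed.

End NewtonPolyhedron.

Theorem lemma5p1 (R : realType) (K : fieldType) (d : nat)
  (I : {mpoly K[d]} -> Prop) (HI : is_monomial_ideal I) (r s : R)
  (hr : 0 <= r) (hs : 0 <= s) :
  (r <= s -> forall p, @real_pow R K d I s p -> @real_pow R K d I r p) /\
  (forall p, ideal_mul (@real_pow R K d I s) (@real_pow R K d I r) p ->
             @real_pow R K d I (s + r) p).
Proof.
split=> [rs p|p]; first exact: real_pow_antimono.
exact: real_pow_mul.
Qed.
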